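(* Let $\lambda\neq\mu$ be partitions of $n$. Then the irreducible $S_n$-representations $V_\lambda$ and $V_\mu$ have different sign signatures.
   Context: $V_\lambda$ is the irreducible complex representation of $S_n$ indexed by the partition $\lambda$ in the standard way ($V_{[1,\dots,1]}$ the sign representation). The sign signature of a representation $V$ of $S_n$ is the set of parabolic subgroups $P$ (subgroups generated by subsets of the simple transpositions $(i,i+1)$, i.e. products $S_{p_1}\times\cdots\times S_{p_k}$ of symmetric groups on consecutive blocks of indices) such that $\dim\operatorname{Hom}_P(\operatorname{sgn}_P,V)>0$, where $\operatorname{sgn}_P$ is the sign representation of $P$. *)

From HB Require Import structures.
From mathcomp Require Import all_boot all_order all_algebra all_fingroup all_solvable all_field all_character.
Set Implicit Arguments. Unset Strict Implicit. Unset Printing Implicit Defensive.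
Import Order.TTheory GRing.Theory Num.Theory.
Local Open Scope ring_scope.

Definition is_part (n : nat) (la : seq nat) : bool :=
  [&& sorted geq la, all (fun p => 0 < p)%N la & sumn la == n].

Definition conj_part (la : seq nat) : seq nat :=
  [seq count (fun p => i < p)%N la | i <- iota 0 (head 0%N la)].

Definition psums (a : seq nat) : seq nat :=
  [seq sumn (take k a) | k <- iota 1 (size a)].

Section Sn.
Variable n : nat.
Local Notation gT := {perm 'I_n}.
Local Notation G := [set: {perm 'I_n}].

Definition simple_transp (i : 'I_n) : gT := tperm i (insubd i i.+1).

Definition parabolic (J : {set 'I_n}) : {group gT} :=
  <<[set simple_transp i | i in [set i in J | (i.+1 < n)%N]]>>%G.

(* The Young subgroup S_{a_1} x S_{a_2} x ... on consecutive blocks of sizes a_i: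
   it is generated by the s_i with i, i+1 in the same block. *)
Definition young_set (a : seq nat) : {set 'I_n} :=
  [set i : 'I_n | (i.+1 < n)%N && (i.+1 \notin psums a)].
Definition young (a : seq nat) : {group gT} := parabolic (young_set a).

Definition sgnC (x : gT) : algC := (-1) ^+ odd_perm x.

(* dim Hom_P(f, V) for V with character chi and f a linear character of P:
   the inner product '[Res_P chi, f]_P, unfolded. *)
Definition hom_dim (chi : 'CF(G)) (P : {set gT}) (f : gT -> algC) : algC :=
  #|P|%:R^-1 * \sum_(x in P) chi x * (f x)^*.

(* V_lambda is the (unique) irreducible representation occurring both in
   Ind_{S_lambda}^{S_n} 1 and in Ind_{S_lambda'}^{S_n} sgn (Young symmetrizer
   construction); by Frobenius reciprocity these conditions read as below. *)
Definition is_specht (la : seq nat) (i : Iirr G) : bool :=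
  (hom_dim 'chi_i (young la) (fun _ => 1) != 0)
  && (hom_dim 'chi_i (young (conj_part la)) sgnC != 0).

Definition specht_irr (la : seq nat) : Iirr G :=
  odflt 0 [pick i | is_specht la i].

Definition specht_char (la : seq nat) : 'CF(G) := 'chi_(specht_irr la).

Definition sign_signature (chi : 'CF(G)) : {set {set gT}} :=
  [set (parabolic J : {set gT}) | J in [set J : {set 'I_n} | hom_dim chi (parabolic J) sgnC != 0]].

End Sn.

From mathcomp Require Import all_boot all_order all_algebra all_fingroup all_solvable.
From mathcomp Require Import all_field all_character.
Set Implicit Arguments. Unset Strict Implicit. Unset Printing Implicit Defensive.
Import Order.TTheory GRing.Theory Num.Theory.

(* By Frobenius reciprocity and Mackey's formula, some irreducible character is a common
   constituent of Ind_P 1 and Ind_Q sgn iff sgn is trivial on P :&: Q :^ y for some y.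
   For Young subgroups P = S_a and Q = S_b, which are generated by transpositions, this
   says that P :&: Q :^ y = 1, i.e. that x |-> (block of x in a, block of y^-1 x in b)
   is injective.
   For a = la and b = la' such a y exists (fill the Young diagram of la row by row), so
   V_la is well defined. If V_la and V_mu had the same sign signature, S_la' would lie in
   that of V_mu, so the first k blocks of mu would meet the j-th block of la' in at most
   min(k, la'_j) points, giving mu <= la in the dominance order. By symmetry la = mu. *)

(* Cut 0, 1, 2, ... into consecutive blocks of sizes a: [block a x] is the block of x
   ([size a] past the last block) and [block_offset a x] the position of x inside it. *)
Fixpoint block (a : seq nat) (x : nat) : nat :=
  if a is p :: a' then if x < p then 0 else (block a' (x - p)).+1 else 0.

Definition block_offset (a : seq nat) (x : nat) : nat :=
  x - sumn (take (block a x) a).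

Section Blocks.
Implicit Types (a : seq nat) (p x y : nat).

Lemma block_size a x : block a x <= size a.
Proof. by elim: a x => [|p a IHa] x //=; case: ifP => // _; apply: IHa. Qed.

Lemma leq_block a x y : x <= y -> block a x <= block a y.
Proof.
elim: a x y => [|p a IHa] x y //= le_xy.
case: ifPn => [_|]; first by case: ifP.
by rewrite -leqNgt => le_px; rewrite (ltnNge y) (leq_trans le_px) // ltnS IHa ?leq_sub2r.
Qed.

Lemma block_cons_lt p a x : x < p -> block (p :: a) x = 0.
Proof. by move=> /= ->. Qed.

Lemma block_cons_addl p a x : block (p :: a) (p + x) = (block a x).+1.
Proof. by rewrite /= ltnNge leq_addr addKn. Qed.

Lemma block_offset_cons_lt p a x : x < p -> block_offset (p :: a) x = x.
Proof. by move=> lt_xp; rewrite /block_offset block_cons_lt ?take0 ?subn0. Qed.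

Lemma block_offset_cons_addl p a x :
  block_offset (p :: a) (p + x) = block_offset a x.
Proof. by rewrite /block_offset block_cons_addl /= subnDA addKn. Qed.

Lemma sumn_take_block a x : sumn (take (block a x) a) <= x.
Proof.
elim: a x => [|p a IHa] x //=; case: ifPn => //=; rewrite -leqNgt => le_px.
by rewrite -{2}(subnKC le_px) leq_add2l IHa.
Qed.

Lemma block_offset_inj a x y :
  block a x = block a y -> block_offset a x = block_offset a y -> x = y.
Proof.
rewrite /block_offset => eq_b; rewrite eq_b => eq_off.
by rewrite -(subnK (sumn_take_block a y)) -eq_off -eq_b subnK ?sumn_take_block.
Qed.

Lemma psums_cons p a : psums (p :: a) = p :: map (addn p) (psums a).
Proof. by rewrite /psums /= take0 addn0 (iotaDl 1 1) -!map_comp. Qed.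

Lemma mem_psums a x : all (fun p => 0 < p) a -> 0 < x ->
  (x \in psums a) = (block a x != block a x.-1).
Proof.
elim: a x => [|p a IHa] x //= /andP[p_gt0 a_gt0] x_gt0.
rewrite psums_cons inE; case: (ltngtP x p) => [lt_xp | lt_px | ->]; last first.
- by rewrite ltn_predL p_gt0.
- have lt_x1p : (x.-1 < p) = false by apply/negbTE; rewrite -ltnNge -ltnS prednK.
  rewrite lt_x1p eqSS -subn1 subnAC subn1 -IHa ?subn_gt0 //.
  apply/mapP/idP => [[z z_a ->]|x_a]; first by rewrite addKn.
  by exists (x - p); rewrite // subnKC // ltnW.
rewrite (leq_ltn_trans (leq_pred x) lt_xp) /=; apply/negbTE/mapP => -[z _ def_x].
by move: lt_xp; rewrite def_x ltnNge leq_addr.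
Qed.

Lemma count_iotaD (P : pred nat) p m :
  count P (iota 0 (p + m)) = count P (iota 0 p) + count (P \o addn p) (iota 0 m).
Proof. by rewrite iotaD add0n -[in iota p _](addn0 p) iotaDl count_cat count_map. Qed.

Lemma count_block_eq a j :
  count (fun x => block a x == j) (iota 0 (sumn a)) = nth 0 a j.
Proof.
elim: a j => [|p a IHa] j; first by rewrite nth_nil.
rewrite count_iotaD (@eq_in_count _ _ (fun=> j == 0)); last first.
  by move=> x; rewrite mem_iota => /andP[_ lt_xp]; rewrite block_cons_lt // eq_sym.
rewrite (@eq_count _ _ (fun x => (block a x).+1 == j)) => [|x]; last first.
  by rewrite -(block_cons_addl p).
case: j => [|j] /=; last by rewrite count_pred0 -IHa.
by rewrite count_predT size_iota (@eq_count _ _ pred0) ?count_pred0 ?addn0.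
Qed.

Lemma count_block_lt a k :
  count (fun x => block a x < k) (iota 0 (sumn a)) = sumn (take k a).
Proof.
elim: a k => [|p a IHa] k; first by case: k.
rewrite count_iotaD (@eq_in_count _ _ (fun=> 0 < k)); last first.
  by move=> x; rewrite mem_iota => /andP[_ lt_xp]; rewrite block_cons_lt.
rewrite (@eq_count _ _ (fun x => (block a x).+1 < k)) => [|x]; last first.
  by rewrite -(block_cons_addl p).
case: k => [|k] /=; last by rewrite count_predT size_iota IHa.
by rewrite count_pred0 (@eq_count _ _ pred0) ?count_pred0.
Qed.

Lemma count_block_offset a j :
  count (fun x => block_offset a x == j) (iota 0 (sumn a)) = count (fun p => j < p) a.
Proof.
elim: a => [|p a IHa] //=.
rewrite count_iotaD (@eq_in_count _ _ (fun x => x == j)); last first.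
  by move=> x; rewrite mem_iota => /andP[_ lt_xp]; rewrite block_offset_cons_lt.
rewrite (@eq_count _ _ (fun x => block_offset a x == j)) => [|x]; last first.
  by rewrite -(block_offset_cons_addl p).
by rewrite IHa (count_uniq_mem _ (iota_uniq 0 p)) mem_iota.
Qed.

End Blocks.

Section Partitions.
Implicit Types (la mu s : seq nat) (j k N : nat).

Definition dominated mu la := forall k, sumn (take k mu) <= sumn (take k la).

Lemma sumn_takeS s k : sumn (take k.+1 s) = sumn (take k s) + nth 0 s k.
Proof.
elim: s k => [|p s IHs] [|k] //=; first by rewrite take0 addn0.
by rewrite IHs addnA.
Qed.

Lemma dominated_anti la mu :
  all (fun p => 0 < p) la -> all (fun p => 0 < p) mu ->
  dominated la mu -> dominated mu la -> la = mu.
Proof.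
move=> la_gt0 mu_gt0 le_la_mu le_mu_la.
have eq_take k : sumn (take k la) = sumn (take k mu).
  by apply/eqP; rewrite eqn_leq le_la_mu le_mu_la.
have eq_nth k : nth 0 la k = nth 0 mu k.
  by apply/(@addnI (sumn (take k la))); rewrite -sumn_takeS eq_take sumn_takeS eq_take.
have eq_size : size la = size mu.
  have pos_nth s k : all (fun p => 0 < p) s -> (k < size s) = (0 < nth 0 s k).
    move=> s_gt0; apply/idP/idP => [lt_ks|]; first exact: (allP s_gt0) (mem_nth 0 lt_ks).
    by apply: contraTT; rewrite -leqNgt => le_sk; rewrite nth_default.
  have mem_size k : (k < size la) = (k < size mu) by rewrite !pos_nth // eq_nth.
  by apply/eqP; rewrite eqn_leq leqNgt mem_size ltnn /= leqNgt -mem_size ltnn.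
by apply: (eq_from_nth (x0 := 0)) => // k _.
Qed.

Lemma sorted_geq_head s : sorted geq s -> all (fun p => p <= head 0 s) s.
Proof.
case: s => //= p s sorted_ps; rewrite leqnn.
exact: order_path_min (rev_trans leq_trans) sorted_ps.
Qed.

Lemma size_conj_part la : size (conj_part la) = head 0 la.
Proof. by rewrite size_map size_iota. Qed.

Lemma nth_conj_part la j :
  sorted geq la -> nth 0 (conj_part la) j = count (fun p => j < p) la.
Proof.
move=> sorted_la; case: (ltnP j (head 0 la)) => [lt_j_head | le_head_j].
  by rewrite (nth_map 0) ?size_iota // nth_iota.
rewrite nth_default ?size_conj_part // (@eq_in_count _ _ pred0) ?count_pred0 // => p la_p.
by rewrite ltnNge (leq_trans (allP (sorted_geq_head sorted_la) p la_p)).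
Qed.

Lemma conj_part_gt0 la : all (fun p => 0 < p) (conj_part la).
Proof.
apply/allP => c /mapP[j]; rewrite mem_iota => /andP[_ lt_j_head] ->.
by case: la lt_j_head => //= p la ->.
Qed.

Lemma sum_ord_ltn N p : \sum_(j < N) (j < p : nat) = minn p N.
Proof.
elim: N => [|N IHN]; first by rewrite big_ord0 minn0.
rewrite big_ord_recr /= IHN; case: (leqP p N) => [le_pN | lt_Np].
  by rewrite !(minn_idPl _) ?leqW ?addn0.
by rewrite addn1 (minn_idPr lt_Np).
Qed.

Lemma sum_count_gtn N s : all (fun p => p <= N) s ->
  \sum_(j < N) count (fun p => j < p) s = sumn s.
Proof.
elim: s => [|p s IHs] /=; first by rewrite big1.
by case/andP=> le_pN le_sN; rewrite big_split /= IHs // sum_ord_ltn (minn_idPl le_pN).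
Qed.

Lemma sumn_conj_part la : sorted geq la -> sumn (conj_part la) = sumn la.
Proof.
move=> sorted_la; rewrite -(sum_count_gtn (sorted_geq_head sorted_la)).
by rewrite sumnE big_map -val_enum_ord big_map big_enum.
Qed.

Lemma count_gtn_take s j k : sorted geq s ->
  count (fun p => j < p) (take k s) = minn k (count (fun p => j < p) s).
Proof.
elim: s k => [|p s IHs] [|k] //= sorted_ps; rewrite ?min0n //.
case: (ltnP j p) => [lt_jp | le_pj].
  by rewrite IHs ?(path_sorted sorted_ps) // minnSS.
have /allP le_s_p := order_path_min (rev_trans leq_trans) sorted_ps.
have no_gtn t : {subset t <= s} -> count (fun q => j < q) t = 0.
  move=> sub_ts; rewrite (@eq_in_count _ _ pred0) ?count_pred0 // => q /sub_ts s_q.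
  by rewrite ltnNge (leq_trans (le_s_p q s_q) le_pj).
by rewrite !no_gtn ?minn0 // => q /mem_take.
Qed.

End Partitions.

Lemma card_ord_count n (P : pred nat) : #|[set i : 'I_n | P i]| = count P (iota 0 n).
Proof.
by rewrite -sum1dep_card -(big_mkord P (fun=> 1)) sum1_count /index_iota subn0.
Qed.

Lemma perm_eq_map_ord n (T : eqType) (f g : 'I_n -> T) :
  perm_eq (map f (enum 'I_n)) (map g (enum 'I_n)) ->
  exists s : 'S_n, forall i, g (s i) = f i.
Proof.
move=> /(@tuple_permP _ _ _ [tuple g i | i < n])[s eq_fg].
have eq_t : [tuple f i | i < n] = [tuple tnth [tuple g i | i < n] (s i) | i < n].
  exact: val_inj.
by exists s => i; move/(congr1 (fun t => tnth t i)): eq_t; rewrite !tnth_mktuple.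
Qed.

Lemma card_lt_leq_sum_minn (T : finType) (u v : T -> nat) (k N : nat) :
  injective (fun w => (u w, v w)) -> (forall w, v w < N) ->
  #|[set w | u w < k]| <= \sum_(j < N) minn k #|[set w | v w == j]|.
Proof.
move=> inj_uv v_lt; rewrite -sum1_card.
rewrite (partition_big (fun w => Ordinal (v_lt w)) predT) //=.
apply: leq_sum => j _; rewrite sum1_card leq_min; apply/andP; split.
  rewrite cardE -(size_map u) -[X in _ <= X](size_iota 0 k); apply: uniq_leq_size.
    rewrite map_inj_in_uniq ?enum_uniq // => w1 w2.
    rewrite !mem_enum => /andP[_ /eqP v1] /andP[_ /eqP v2] eq_u.
    by apply: inj_uv; rewrite /= eq_u -[v w1]/(val (Ordinal (v_lt w1))) v1 -v2.
  by move=> c /mapP[w]; rewrite mem_enum => /andP[] /[!inE] lt_uk _ ->; rewrite mem_iota.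
by apply/subset_leq_card/subsetP => w; rewrite !inE => /andP[_ /eqP <-].
Qed.

Section YoungSubgroups.
Variable n : nat.
Implicit Types (a b : seq nat) (x y : 'I_n).
Local Open Scope group_scope.

Lemma simple_transpE (i : 'I_n) (lt_i1n : i.+1 < n) :
  simple_transp i = tperm i (Ordinal lt_i1n).
Proof. by congr tperm; apply: val_inj; rewrite val_insubd lt_i1n. Qed.

Lemma young_simple_transp a (i : 'I_n) (lt_i1n : i.+1 < n) :
  all (fun p => 0 < p) a -> block a i.+1 = block a i ->
  tperm i (Ordinal lt_i1n) \in young n a.
Proof.
move=> a_gt0 eq_b; rewrite -simple_transpE; apply/mem_gen/imset_f.
by rewrite !inE lt_i1n mem_psums //= eq_b eqxx.
Qed.

Lemma young_stab_block a (g : {perm 'I_n}) :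
  all (fun p => 0 < p) a -> g \in young n a -> forall x, block a (g x) = block a x.
Proof.
move=> a_gt0 /gen_prodgP[m [t t_gen ->]].
elim/big_ind: _ => [x | g1 g2 IH1 IH2 x | i _]; first by rewrite perm1.
  by rewrite permM IH2 IH1.
have /imsetP[j] := t_gen i; rewrite !inE => /andP[/andP[lt_j1n j1_psums] _] ->.
have eq_b : block a j.+1 = block a j.
  by apply/eqP; move: j1_psums; rewrite mem_psums // negbK.
by move=> x; rewrite (simple_transpE lt_j1n); case: tpermP => // ->.
Qed.

Lemma young_tperm a x y :
  all (fun p => 0 < p) a -> block a x = block a y -> tperm x y \in young n a.
Proof.
move=> a_gt0; wlog le_xy : x y / x <= y.
  move=> IH; case: (leqP x y) => [|/ltnW le_yx]; first exact: IH.
  by rewrite tpermC => eq_b; apply: IH.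
move=> eq_b; have def_y : val y = x + (y - x) by rewrite subnKC.
move: (y - x) def_y => d; clear le_xy; elim: d y eq_b => [|d IHd] y eq_b def_y.
  by rewrite (_ : y = x) ?tperm1 ?group1 //; apply: val_inj; rewrite def_y addn0.
have lt_xdn : x + d < n by apply: leq_trans (ltn_ord y); rewrite ltnS def_y addnS.
pose z := Ordinal lt_xdn.
have eq_bxz : block a x = block a z.
  apply/anti_leq/andP; split; first exact: leq_block (leq_addr d x).
  by rewrite eq_b; apply: leq_block; rewrite /= def_y addnS.
have lt_z1n : z.+1 < n by rewrite /= -addnS -def_y ltn_ord.
have def_y' : y = Ordinal lt_z1n by apply: val_inj; rewrite /= def_y addnS.
have t_zy : tperm z y \in young n a.
  by rewrite def_y'; apply: young_simple_transp; rewrite //= -addnS -def_y -eq_b -eq_bxz.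
have := groupJ t_zy (IHd z eq_bxz erefl); rewrite tpermJ tpermR tpermD //.
  by rewrite -val_eqE def_y ltn_eqF // addnS ltnS leq_addr.
by rewrite -val_eqE def_y addnS ltn_eqF.
Qed.

Lemma young_meet_conj_sub_Alt a b (y : {perm 'I_n}) :
  all (fun p => 0 < p) a -> all (fun p => 0 < p) b ->
  young n a :&: young n b :^ y \subset 'Alt_('I_n) <->
  injective (fun x => (block a x, block b (y^-1 x))).
Proof.
move=> a_gt0 b_gt0; split=> [/subsetP even_meet x1 x2 [eq_a eq_b] | inj_ab].
  have t_a : tperm x1 x2 \in young n a by apply: young_tperm.
  have t_b : tperm x1 x2 \in young n b :^ y.
    by rewrite mem_conjg tpermJ young_tperm.
  have := even_meet (tperm x1 x2); rewrite inE t_a t_b Alt_even odd_tperm negbK.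
  by move=> /(_ isT) /eqP.
apply/subsetP => t /setIP[t_a]; rewrite mem_conjg => t_b.
suff -> : t = 1 by rewrite group1.
apply/permP => x; rewrite perm1; apply: inj_ab; congr pair; first exact: young_stab_block.
have := young_stab_block b_gt0 t_b (y^-1 x).
by rewrite conjgE invgK !permM permKV.
Qed.

End YoungSubgroups.

Section Characters.
Local Open Scope ring_scope.

Lemma cfdot_char_neq0P (gT : finGroupType) (G : {group gT}) (phi psi : 'CF(G)) :
  phi \is a character -> psi \is a character ->
  reflect (exists i : Iirr G, '[phi, 'chi_i] != 0 /\ '[psi, 'chi_i] != 0)
          ('[phi, psi] != 0).
Proof.
move=> Nphi Npsi; rewrite cfdot_char_r //.
have N_term i : 0 <= '[phi, 'chi_i] * '[psi, 'chi_i].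
  by rewrite mulr_ge0 ?natr_ge0 ?Cnat_cfdot_char_irr.
apply: (iffP idP) => [/eqP/psumr_neq0P[// | i /andP[_]] | [i [phi_i psi_i]]].
  by rewrite lt_def mulf_eq0 negb_or => /andP[/andP[]]; exists i.
apply/eqP => /(psumr_eq0P (fun j _ => N_term j))/(_ i isT)/eqP.
by rewrite mulf_eq0 (negPf phi_i) (negPf psi_i).
Qed.

Variable n : nat.
Local Notation gT := {perm 'I_n}.
Local Notation G := [set: gT]%G.

Definition sgn_mx (x : gT) : 'M[algC]_1 := (sgnC x)%:M.

Fact sgn_mx_repr : mx_repr G sgn_mx.
Proof.
split=> [|x y _ _]; first by rewrite /sgn_mx /sgnC odd_perm1.
by rewrite /sgn_mx /sgnC odd_permM signr_addb scalar_mxM.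
Qed.

Definition sgn_char : 'CF(G) := cfRepr (MxRepresentation sgn_mx_repr).

Lemma sgn_charE x : sgn_char x = sgnC x.
Proof. by rewrite cfunE inE mulr1n mxtrace_scalar. Qed.

Lemma sum_sgnC_group (H : {group gT}) :
  \sum_(x in H) sgnC x = (if (H \subset 'Alt_('I_n))%g then #|H| else 0)%:R.
Proof.
case: ifPn => [/subsetP H_even | /subsetPn[t H_t]].
  rewrite -sumr_const; apply: eq_bigr => x /H_even.
  by rewrite Alt_even /sgnC => /negbTE ->.
rewrite Alt_even negbK => odd_t; apply/eqP; rewrite -eqNr -sumrN.
rewrite [eqbRHS](reindex_inj (mulgI t)) /=; apply/eqP/eq_big => [x | x _].
  by rewrite groupMl.
by rewrite /sgnC odd_permM odd_t signr_addb expr1 mulN1r.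
Qed.

Lemma hom_dim_cfdot_Ind (P : {group gT}) (phi : 'CF(P)) (f : gT -> algC) chi :
  phi \is a character -> chi \is a character -> {in P, phi =1 f} ->
  hom_dim chi P f = '['Ind[G] phi, chi].
Proof.
move=> Nphi Nchi phi_f; rewrite -Frobenius_reciprocity.
rewrite -[RHS]conj_natr ?Cnat_cfdot_char ?cfRes_char // -cfdotC cfdotE.
by congr (_ * _); apply: eq_bigr => x P_x; rewrite cfResE ?subsetT ?phi_f.
Qed.

Lemma sum_cfInd_sgn (P Q : {group gT}) :
  \sum_(x in P) 'Ind[G] ('Res[Q] sgn_char) x
    = #|Q|%:R^-1 * \sum_(y in G) \sum_(x in P :&: (Q :^ y)%g) sgnC x.
Proof.
under eq_bigr => x _ do rewrite cfIndE ?subsetT //.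
rewrite -mulr_sumr exchange_big /= (reindex_inj invg_inj) /=; congr (_ * _).
apply: eq_big => [y | y _]; first by rewrite !inE.
rewrite [RHS](eq_bigl (fun x => (x \in P) && (x \in (Q :^ y)%g))) => [|x].
  rewrite [RHS]big_mkcondr /=; apply: eq_bigr => x _; rewrite mem_conjg.
  case: ifPn => [Q_x | notQ_x]; last by rewrite cfun0.
  by rewrite cfResE ?subsetT // sgn_charE /sgnC odd_permJ.
by rewrite inE.
Qed.

Lemma cfdot_Ind_sgn_neq0 (P Q : {group gT}) :
  '['Ind[G] (1 : 'CF(P)), 'Ind[G] ('Res[Q] sgn_char)] != 0 <->
  exists y, (P :&: Q :^ y \subset 'Alt_('I_n))%g.
Proof.
rewrite -Frobenius_reciprocity cfdotE mulf_eq0 invr_eq0 negb_or neq0CG /=.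
under eq_bigr => x P_x do rewrite cfun1E P_x mul1r cfResE ?subsetT //.
rewrite -rmorph_sum conjC_eq0 sum_cfInd_sgn mulf_eq0 invr_eq0 negb_or neq0CG /=.
under eq_bigr => y _ do rewrite sum_sgnC_group.
rewrite -natr_sum pnatr_eq0 sum_nat_eq0 negb_forall.
split=> [/existsP[y] | [y sub_y]].
  by rewrite negb_imply => /andP[_]; case: ifP => // sub_y _; exists y.
by apply/existsP; exists y; rewrite inE /= sub_y -lt0n cardG_gt0.
Qed.

Lemma common_constituentP (P Q : {group gT}) :
  (exists i : Iirr G, hom_dim 'chi_i P (fun=> 1) != 0 /\ hom_dim 'chi_i Q (@sgnC n) != 0)
  <-> exists y, (P :&: Q :^ y \subset 'Alt_('I_n))%g.
Proof.
have N1 : 'Ind[G] (1 : 'CF(P)) \is a character by rewrite cfInd_char ?cfun1_char.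
have Nsgn : 'Ind[G] ('Res[Q] sgn_char) \is a character.
  by rewrite cfInd_char ?cfRes_char ?cfRepr_char.
have hom1 i : hom_dim 'chi_i P (fun=> 1) = '['Ind[G] (1 : 'CF(P)), 'chi_i].
  apply: hom_dim_cfdot_Ind; rewrite ?cfun1_char ?irr_char // => x P_x.
  by rewrite cfun1E P_x.
have homsgn i : hom_dim 'chi_i Q (@sgnC n) = '['Ind[G] ('Res[Q] sgn_char), 'chi_i].
  apply: hom_dim_cfdot_Ind; rewrite ?cfRes_char ?cfRepr_char ?irr_char // => x Q_x.
  by rewrite cfResE ?subsetT ?sgn_charE.
apply: (iff_trans _ (cfdot_Ind_sgn_neq0 P Q)).
split=> [[i [Pi Qi]] | /(cfdot_char_neq0P N1 Nsgn)[i]].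
  by apply/(cfdot_char_neq0P N1 Nsgn); exists i; rewrite -hom1 -homsgn.
by exists i; rewrite hom1 homsgn.
Qed.

End Characters.

Section YoungCombinatorics.
Variable n : nat.
Implicit Types (la mu al be : seq nat).

Lemma young_common_constituentP al be :
  all (fun p => 0 < p) al -> all (fun p => 0 < p) be ->
  (exists i : Iirr [set: {perm 'I_n}]%G, hom_dim 'chi_i (young n al) (fun=> 1) != 0
                                         /\ hom_dim 'chi_i (young n be) (@sgnC n) != 0)%R
  <-> exists y : {perm 'I_n}, injective (fun x : 'I_n => (block al x, block be (y x))).
Proof.
move=> al_gt0 be_gt0; have meetP y := @young_meet_conj_sub_Alt n al be y al_gt0 be_gt0.
apply: (iff_trans (common_constituentP _ _)).
split=> [[y /meetP inj_y] | [y inj_y]]; first by exists y^-1%g.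
by exists y^-1%g; apply/meetP; rewrite invgK.
Qed.

Lemma exists_young_conj_part_inj la : is_part n la ->
  exists y : {perm 'I_n},
    injective (fun x : 'I_n => (block la x, block (conj_part la) (y x))).
Proof.
case/and3P=> sorted_la _ /eqP sum_la.
have map_ord f : map (fun x : 'I_n => f (val x)) (enum 'I_n) = map f (iota 0 n).
  by rewrite -val_enum_ord -map_comp.
(* [block la x] and [block_offset la x] are the row and column of x in the diagram of la;
   y sends x into the block of la' indexed by its column. *)
have [y y_off] : exists y : 'S_n,
    forall x, block (conj_part la) (y x) = block_offset la x.
  apply: (@perm_eq_map_ord n _ (block_offset la \o val) (block (conj_part la) \o val)).
  rewrite !map_ord; apply/allP => j _; rewrite /= !count_map.
  apply/eqP; transitivity (count (fun p => j < p) la).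
    by rewrite -count_block_offset sum_la.
  by rewrite -nth_conj_part // -count_block_eq sumn_conj_part // sum_la.
exists y => x1 x2 [eq_b eq_c]; apply/val_inj/(block_offset_inj eq_b).
by rewrite -!y_off eq_c.
Qed.

Lemma dominated_of_young_inj mu la (y : {perm 'I_n}) : is_part n mu -> is_part n la ->
  injective (fun x : 'I_n => (block mu x, block (conj_part la) (y x))) -> dominated mu la.
Proof.
case/and3P=> _ _ /eqP sum_mu /and3P[sorted_la _ /eqP sum_la] inj_y k.
have head_le_n : head 0 la <= n.
  by rewrite -sum_la; case: (la) => //= p s; apply: leq_addr.
have la_le_n : all (fun p => p <= n) la.
  by apply/allP => p /(allP (sorted_geq_head sorted_la)) /leq_trans; apply.
have conj_lt x : block (conj_part la) (y x) < n.+1.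
  by rewrite ltnS (leq_trans (block_size _ _)) ?size_conj_part.
have card_fib j : #|[set x | block (conj_part la) (y x) == j]| = nth 0 (conj_part la) j.
  have -> : [set x | block (conj_part la) (y x) == j]
            = y @^-1: [set x : 'I_n | block (conj_part la) x == j].
    by apply/setP => x; rewrite !inE.
  rewrite card_preimset ?(card_ord_count n (fun x => block (conj_part la) x == j)) //.
    by rewrite -sum_la -(sumn_conj_part sorted_la) count_block_eq.
  exact: perm_inj.
have := card_lt_leq_sum_minn k inj_y conj_lt.
rewrite (card_ord_count n (fun x => block mu x < k)) -{1}sum_mu count_block_lt.
move=> /leq_trans; apply.
under eq_bigr => j _ do rewrite card_fib nth_conj_part // -count_gtn_take //.
rewrite sum_count_gtn //; apply/allP => p /mem_take /(allP la_le_n).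
exact: leqW.
Qed.

Lemma specht_irrP la : is_part n la -> is_specht la (specht_irr n la).
Proof.
move=> la_part; have [y inj_y] := exists_young_conj_part_inj la_part.
have /and3P[_ la_gt0 _] := la_part.
have [i [hom1 homsgn]] :=
  (young_common_constituentP la_gt0 (conj_part_gt0 la)).2 (ex_intro _ y inj_y).
rewrite /specht_irr; case: pickP => [//|none].
by move: (none i); rewrite /is_specht hom1 homsgn.
Qed.

Lemma young_sign_signature (chi : 'CF([set: {perm 'I_n}])) a :
  ((young n a : {set _}) \in sign_signature chi)
    = (hom_dim chi (young n a) (@sgnC n) != 0)%R.
Proof.
apply/imsetP/idP => [[J] | young_sgn]; first by rewrite inE => J_sgn ->.
by exists (young_set n a); rewrite ?inE.
Qed.

Lemma sign_signature_dominated la mu : is_part n la -> is_part n mu ->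
  sign_signature (specht_char n la) = sign_signature (specht_char n mu) ->
  dominated mu la.
Proof.
move=> la_part mu_part eq_sig.
have /andP[_ la_sgn] := specht_irrP la_part.
have /andP[mu_1 _] := specht_irrP mu_part.
have mu_sgn : (hom_dim (specht_char n mu) (young n (conj_part la)) (@sgnC n) != 0)%R.
  by rewrite -young_sign_signature -eq_sig young_sign_signature.
have /and3P[_ mu_gt0 _] := mu_part.
have [y inj_y] := (young_common_constituentP mu_gt0 (conj_part_gt0 la)).1
  (ex_intro _ (specht_irr n mu) (conj mu_1 mu_sgn)).
exact: dominated_of_young_inj mu_part la_part inj_y.
Qed.

End YoungCombinatorics.

Theorem proposition3p10 (n : nat) (la mu : seq nat) :
  is_part n la -> is_part n mu -> la <> mu ->
  sign_signature (specht_char n la) <> sign_signature (specht_char n mu).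
Proof.
move=> la_part mu_part neq_la_mu eq_sig; apply: neq_la_mu.
have /and3P[_ la_gt0 _] := la_part; have /and3P[_ mu_gt0 _] := mu_part.
apply: dominated_anti => //.
  exact: sign_signature_dominated mu_part la_part (esym eq_sig).
exact: sign_signature_dominated la_part mu_part eq_sig.
Qed.
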